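(* For every graph $G=(V,E)$ with $V=\{1,\dots,n\}$ we have $\vartheta_2(G)=\vartheta_2'(G)$, where $$\vartheta_2'(G)=\max\Big\{\sum_{i=1}^n c(v_i,v_0)\Big\}$$ with the maximum taken over all integers $d\geq1$ and all families $(v_0,v_1,\dots,v_n)$ of vectors in $\mathbb R^d$ such that $\langle v_0,v_i\rangle\geq0$ for all $i$ and $\langle v_i,v_j\rangle\leq0$ whenever $\{i,j\}\in E$.
   Context: For $x,y\in\mathbb R^d$, $c(x,y)=\langle x,y\rangle^2\|x\|^{-2}\|y\|^{-2}$ if $x,y\neq0$ and $c(x,y)=0$ otherwise. For a graph $H$ on $\{1,\dots,n\}$ and real $k>1$, a rigid vector $k$-coloring of $H$ is an $n$-tuple of unit vectors $(u_1,\dots,u_n)$ in $\mathbb R^n$ with $\langle u_i,u_j\rangle=-1/(k-1)$ for all edges $\{i,j\}$ of $H$ and $\langle u_i,u_j\rangle\geq-1/(k-1)$ for all non-adjacent $i\neq j$; $\bar\vartheta_2(H)$ is the infimum of $k>1$ such that $H$ admits a rigid vector $k$-coloring, and $\vartheta_2(G)=\bar\vartheta_2(\bar G)$ where $\bar G$ is the complement of $G$. *)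

From HB Require Import structures.
From mathcomp Require Import all_boot all_order all_algebra.
From mathcomp Require Import classical_sets reals.
Set Implicit Arguments. Unset Strict Implicit. Unset Printing Implicit Defensive.
Import Order.TTheory GRing.Theory Num.Theory.
Local Open Scope ring_scope.
Local Open Scope classical_set_scope.

Definition dotp (R : realType) (d : nat) (x y : 'rV[R]_d) : R :=
  \sum_(i < d) x 0 i * y 0 i.

Definition cfun (R : realType) (d : nat) (x y : 'rV[R]_d) : R :=
  if (x != 0) && (y != 0) then
    dotp x y ^+ 2 / (dotp x x * dotp y y)
  else 0.

Definition simple_graph (n : nat) (e : rel 'I_n) : Prop :=
  (forall i j, e i j = e j i) /\ (forall i, e i i = false).

Definition compl_graph (n : nat) (e : rel 'I_n) : rel 'I_n :=
  fun i j => (i != j) && ~~ e i j.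

Definition rigid_vector_coloring (R : realType) (n : nat) (H : rel 'I_n)
    (k : R) (u : 'I_n -> 'rV[R]_n) : Prop :=
  (forall i, dotp (u i) (u i) = 1) /\
  (forall i j, H i j -> dotp (u i) (u j) = - (k - 1)^-1) /\
  (forall i j, i != j -> ~~ H i j -> - (k - 1)^-1 <= dotp (u i) (u j)).

Definition theta_bar2 (R : realType) (n : nat) (H : rel 'I_n) : R :=
  inf [set k : R | 1 < k /\ exists u, rigid_vector_coloring H k u].

Definition theta2 (R : realType) (n : nat) (G : rel 'I_n) : R :=
  theta_bar2 R (compl_graph G).

Definition theta2'_feasible (R : realType) (n : nat) (G : rel 'I_n) (d : nat)
    (v0 : 'rV[R]_d) (v : 'I_n -> 'rV[R]_d) : Prop :=
  (forall i, 0 <= dotp v0 (v i)) /\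
  (forall i j, G i j -> dotp (v i) (v j) <= 0).

Definition theta2'_value (R : realType) (n : nat) (d : nat)
    (v0 : 'rV[R]_d) (v : 'I_n -> 'rV[R]_d) : R :=
  \sum_(i < n) cfun (v i) v0.

From HB Require Import structures.
From mathcomp Require Import all_boot all_order all_algebra.
From mathcomp Require Import boolp classical_sets reals topology normedtype derive.
From mathcomp Require Import ring lra.
Import numFieldNormedType.Exports.
Set Implicit Arguments. Unset Strict Implicit. Unset Printing Implicit Defensive.
Import Order.TTheory GRing.Theory Num.Theory.
Local Open Scope ring_scope.
Local Open Scope classical_set_scope.

(* Weak duality: given an admissible family (v_0, v) and a rigid vector
   k-colouring u of the complement, let y_i be the projection of v_0 onto the
   line R v_i.  Then <y_i, y_j> <= 0 on the edges, and since the Schur product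
   of the Gram matrices of y and u is positive semidefinite,
   |sum_i y_i|^2 <= k sum_i |y_i|^2; Cauchy-Schwarz against v_0 turns this into
   sum_i c(v_i, v_0) <= k.

   Strong duality: for a target k, minimise over the trace-one Gram matrices
   B = X X^T the penalty (k - sum_ij B_ij)_+^2 + sum_{ij in E} (B_ij)_+^2.  If
   the minimum is 0, the rows of X (those with negative inner product with
   their sum replaced by 0) form an admissible family of value at least k.
   Otherwise the first-order optimality condition at the minimiser is a linear
   matrix inequality, and a Cholesky factor of the resulting positive
   semidefinite matrix is a rigid vector k'-colouring with k' < k.  Taking
   k = theta_2(G) gives an admissible family of value exactly theta_2(G). *)

Section DotProduct.
Variables (R : realType) (d : nat).
Implicit Types (x y z : 'rV[R]_d).

Lemma dotpE x y : dotp x y = (x *m y^T) 0 0.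
Proof. by rewrite mxE; apply: eq_bigr => i _; rewrite mxE. Qed.

Lemma dotpC x y : dotp x y = dotp y x.
Proof. by apply: eq_bigr => i _; rewrite mulrC. Qed.

Lemma dotpDl x y z : dotp (x + y) z = dotp x z + dotp y z.
Proof. by rewrite /dotp -big_split; apply: eq_bigr => i _; rewrite mxE mulrDl. Qed.

Lemma dotpZl a x z : dotp (a *: x) z = a * dotp x z.
Proof. by rewrite /dotp mulr_sumr; apply: eq_bigr => i _; rewrite mxE mulrA. Qed.

Lemma dotpNl x z : dotp (- x) z = - dotp x z.
Proof. by rewrite -scaleN1r dotpZl mulN1r. Qed.

Lemma dotpDr x y z : dotp z (x + y) = dotp z x + dotp z y.
Proof. by rewrite dotpC dotpDl !(dotpC z). Qed.

Lemma dotpZr a x z : dotp z (a *: x) = a * dotp z x.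
Proof. by rewrite dotpC dotpZl dotpC. Qed.

Lemma dotp0l z : dotp 0 z = 0.
Proof. by rewrite -(scale0r 0) dotpZl mul0r. Qed.

Lemma dotp0r z : dotp z 0 = 0.
Proof. by rewrite dotpC dotp0l. Qed.

Lemma dotp_suml (I : Type) (s : seq I) (F : I -> 'rV[R]_d) z :
  dotp (\sum_(i <- s) F i) z = \sum_(i <- s) dotp (F i) z.
Proof.
elim: s => [|i s IH]; first by rewrite !big_nil dotp0l.
by rewrite !big_cons dotpDl IH.
Qed.

Lemma dotp_sumr (I : Type) (s : seq I) (F : I -> 'rV[R]_d) z :
  dotp z (\sum_(i <- s) F i) = \sum_(i <- s) dotp z (F i).
Proof. by rewrite dotpC dotp_suml; apply: eq_bigr => i _; rewrite dotpC. Qed.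

Lemma dotpxx x : dotp x x = \sum_i x 0 i ^+ 2.
Proof. by apply: eq_bigr => i _; rewrite expr2. Qed.

Lemma dotp_ge0 x : 0 <= dotp x x.
Proof. by rewrite dotpxx; apply: sumr_ge0 => i _; apply: sqr_ge0. Qed.

Lemma dotp_eq0 x : (dotp x x == 0) = (x == 0).
Proof.
apply/idP/eqP => [|->]; last by rewrite dotp0l.
rewrite dotpxx psumr_eq0 => [/allP x0|i _]; last exact: sqr_ge0.
apply/rowP => i; rewrite mxE; apply/eqP.
by have := x0 i (mem_index_enum _); rewrite implyTb sqrf_eq0.
Qed.

Lemma dotp_gt0 x : (0 < dotp x x) = (x != 0).
Proof. by rewrite lt_def dotp_eq0 dotp_ge0 andbT. Qed.

Lemma cauchy_schwarz x y : dotp x y ^+ 2 <= dotp x x * dotp y y.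
Proof.
have [->|x0] := eqVneq x 0; first by rewrite !dotp0l expr0n mul0r.
have xx0 : 0 < dotp x x by rewrite dotp_gt0.
have := dotp_ge0 (dotp x x *: y + (- dotp x y) *: x).
rewrite dotpDl !dotpDr !dotpZl !dotpZr (dotpC y x).
move: xx0; set X := dotp x x; set P := dotp x y; set Y := dotp y y => xx0.
have -> : X * (X * Y) + X * (- P * P) + (- P * (X * P) + - P * (- P * X))
    = X * (X * Y - P ^+ 2) by ring.
by rewrite pmulr_rge0 // subr_ge0.
Qed.

Lemma cfun_ge0 x y : 0 <= cfun x y.
Proof.
rewrite /cfun; case: ifP => // _.
by rewrite divr_ge0 ?sqr_ge0 ?mulr_ge0 ?dotp_ge0.
Qed.

Lemma cfun_le1 x y : cfun x y <= 1.
Proof.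
rewrite /cfun; case: ifP => // /andP [x0 y0].
by rewrite ler_pdivrMr ?mul1r ?cauchy_schwarz ?mulr_gt0 ?dotp_gt0.
Qed.

(* Vanishes for [x = 0], since [0^-1 = 0]. *)
Definition line_proj x v := (dotp x v / dotp x x) *: x.

Lemma dotp_line_proj x v : dotp (line_proj x v) v = cfun x v * dotp v v.
Proof.
rewrite /line_proj /cfun dotpZl.
have [->|x0] := eqVneq x 0; first by rewrite dotp0l !mul0r.
have [->|v0] := eqVneq v 0; first by rewrite !dotp0r !mulr0.
rewrite /=; field.
by rewrite !gt_eqF ?dotp_gt0.
Qed.

Lemma dotp_line_projxx x v :
  dotp (line_proj x v) (line_proj x v) = cfun x v * dotp v v.
Proof.
rewrite -dotp_line_proj /line_proj !dotpZl dotpZr.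
have [->|x0] := eqVneq x 0; first by rewrite !dotp0l !mulr0.
by field; rewrite gt_eqF ?dotp_gt0.
Qed.

End DotProduct.

Section WeakDuality.
Variable R : realType.

Lemma sum_dotp_mul_ge0 n d m (y : 'I_n -> 'rV[R]_d) (u : 'I_n -> 'rV[R]_m) :
  0 <= \sum_i \sum_j dotp (y i) (y j) * dotp (u i) (u j).
Proof.
(* Schur: the sum is the squared length of the tensor [\sum_i y i (x) u i]. *)
pose w p := \sum_i y i 0 p *: u i.
have -> : \sum_i \sum_j dotp (y i) (y j) * dotp (u i) (u j) = \sum_p dotp (w p) (w p).
  transitivity (\sum_p \sum_i \sum_j dotp (y i 0 p *: u i) (y j 0 p *: u j)); last first.
    apply: eq_bigr => p _; rewrite /w dotp_suml.
    by apply: congr_big => // i _; rewrite dotp_sumr.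
  rewrite [RHS]exchange_big; apply: eq_bigr => i _; rewrite [RHS]exchange_big.
  apply: eq_bigr => j _; rewrite [dotp (y i) _]/dotp mulr_suml.
  by apply: eq_bigr => p _; rewrite dotpZl dotpZr mulrA.
by apply: sumr_ge0 => p _; apply: dotp_ge0.
Qed.

Lemma rigid_coloring_sum_le n (G : rel 'I_n) (k : R) (u : 'I_n -> 'rV[R]_n)
    d (y : 'I_n -> 'rV[R]_d) :
  1 < k -> rigid_vector_coloring (compl_graph G) k u ->
  (forall i j, G i j -> dotp (y i) (y j) <= 0) ->
  dotp (\sum_i y i) (\sum_i y i) <= k * \sum_i dotp (y i) (y i).
Proof.
move=> k1 [u1 [uH unH]] yG.
have k1p : 0 < k - 1 by rewrite subr_gt0.
have k10 : k - 1 != 0 by rewrite gt_eqF.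
pose w i j := (k - 1) * dotp (u i) (u j) + 1.
apply: (@le_trans _ _ (\sum_i \sum_j dotp (y i) (y j) * w i j)).
  rewrite dotp_suml -subr_ge0 -sumrB.
  under eq_bigr do rewrite dotp_sumr -sumrB.
  have -> : \sum_i \sum_j (dotp (y i) (y j) * w i j - dotp (y i) (y j)) =
      (k - 1) * \sum_i \sum_j dotp (y i) (y j) * dotp (u i) (u j).
    rewrite mulr_sumr; apply: eq_bigr => i _; rewrite mulr_sumr.
    by apply: eq_bigr => j _; rewrite /w; ring.
  by rewrite mulr_ge0 ?sum_dotp_mul_ge0 ?ltW.
rewrite mulr_sumr; apply: ler_sum => i _; rewrite (bigD1 i) //=.
rewrite /w u1 mulr1 subrK mulrC -[X in _ <= X]addr0 lerD2l.
apply: sumr_le0 => j ji; have [Gij|nGij] := boolP (G i j).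
  apply: mulr_le0_ge0; first exact: yG.
  have := unH i j; rewrite eq_sym ji /compl_graph eq_sym ji Gij => /(_ isT isT).
  by rewrite -subr_ge0 opprK -(pmulr_rge0 _ k1p) mulrDr mulfV.
by rewrite uH ?mulrN ?mulfV ?addNr ?mulr0 // /compl_graph eq_sym ji.
Qed.

Lemma theta2'_value_le_coloring n (G : rel 'I_n) d (v0 : 'rV[R]_d)
    (v : 'I_n -> 'rV[R]_d) (k : R) (u : 'I_n -> 'rV[R]_n) :
  theta2'_feasible G v0 v -> 1 < k -> rigid_vector_coloring (compl_graph G) k u ->
  theta2'_value v0 v <= k.
Proof.
move=> [v0v vG] k1 col.
have [->|v00] := eqVneq v0 0.
  rewrite /theta2'_value big1 ?ltW ?(lt_trans ltr01) // => i _.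
  by rewrite /cfun eqxx andbF.
set S := theta2'_value v0 v.
have S0 : 0 <= S by apply: sumr_ge0 => i _; apply: cfun_ge0.
have V0 : 0 < dotp v0 v0 by rewrite dotp_gt0.
pose y i := line_proj (v i) v0.
have yG i j : G i j -> dotp (y i) (y j) <= 0.
  have c0 l : 0 <= dotp (v l) v0 / dotp (v l) (v l).
    by rewrite divr_ge0 ?dotp_ge0 // dotpC.
  by move=> Gij; rewrite dotpZl dotpZr mulr_ge0_le0 ?mulr_ge0_le0 ?vG.
have yy : \sum_i dotp (y i) (y i) = S * dotp v0 v0.
  by rewrite mulr_suml; apply: eq_bigr => i _; apply: dotp_line_projxx.
have yv0 : dotp (\sum_i y i) v0 = S * dotp v0 v0.
  by rewrite dotp_suml mulr_suml; apply: eq_bigr => i _; apply: dotp_line_proj.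
have := cauchy_schwarz (\sum_i y i) v0.
move/le_trans/(_ (ler_wpM2r (ltW V0) (rigid_coloring_sum_le k1 col yG))).
rewrite yv0 yy; move: V0; set V := dotp v0 v0 => V0 H.
have {H} SS : S * S <= k * S by rewrite -(ler_pM2r (mulr_gt0 V0 V0)); nra.
have [->|Sp] := eqVneq S 0; first exact: ltW (lt_trans ltr01 k1).
by move: SS; rewrite ler_pM2r // lt_def Sp.
Qed.

End WeakDuality.

Section FeasibleFromRows.
Variable R : realType.

Lemma cfun_mul_dotp_ge d (x s : 'rV[R]_d) :
  2 * dotp s s * dotp x s - dotp s s ^+ 2 * dotp x x <= cfun x s * dotp s s.
Proof.
have [->|x0] := eqVneq x 0; first by rewrite !dotp0l /cfun eqxx /= !mulr0 mul0r; lra.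
have [->|s0] := eqVneq s 0; first by rewrite !dotp0r !mulr0; lra.
rewrite /cfun x0 s0 /= -subr_ge0.
have -> : dotp x s ^+ 2 / (dotp x x * dotp s s) * dotp s s
    - (2 * dotp s s * dotp x s - dotp s s ^+ 2 * dotp x x)
    = (dotp x s - dotp s s * dotp x x) ^+ 2 / dotp x x.
  by field; rewrite !gt_eqF ?dotp_gt0.
by rewrite divr_ge0 ?sqr_ge0 ?dotp_ge0.
Qed.

Lemma theta2'_value_ge_sum_rows n (G : rel 'I_n) d (x : 'I_n -> 'rV[R]_d) :
  \sum_i dotp (x i) (x i) = 1 -> (forall i j, G i j -> dotp (x i) (x j) <= 0) ->
  exists (v0 : 'rV[R]_d) (v : 'I_n -> 'rV[R]_d),
    theta2'_feasible G v0 v /\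
    dotp (\sum_i x i) (\sum_i x i) <= theta2'_value v0 v.
Proof.
move=> x1 xG; set s := \sum_i x i; set l := dotp s s.
pose v i := if 0 <= dotp (x i) s then x i else 0.
exists s, v; split.
  split=> [i|i j Gij]; rewrite /v.
    by case: ifP => [|_]; rewrite ?dotp0r // dotpC.
  by case: ifP => _; case: ifP => _; rewrite ?dotp0l ?dotp0r ?xG.
have value_ge : 2 * l * l - l ^+ 2 <= theta2'_value s v * l.
  have <- : \sum_i (2 * l * dotp (x i) s - l ^+ 2 * dotp (x i) (x i)) = 2 * l * l - l ^+ 2.
    by rewrite sumrB -!mulr_sumr x1 -dotp_suml mulr1.
  rewrite /theta2'_value mulr_suml.
  apply: ler_sum => i _; rewrite /v; case: ifP => [_|]; first exact: cfun_mul_dotp_ge.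
  move/negbT; rewrite -ltNge => xs; rewrite /cfun eqxx /= mul0r.
  have : 2 * l * dotp (x i) s <= 0 by rewrite mulr_ge0_le0 ?mulr_ge0 ?dotp_ge0 ?ltW.
  have : 0 <= l ^+ 2 * dotp (x i) (x i) by rewrite mulr_ge0 ?sqr_ge0 ?dotp_ge0.
  lra.
have [l0|lp] := eqVneq l 0.
  by rewrite l0 /theta2'_value sumr_ge0 // => i _; apply: cfun_ge0.
have lpos : 0 < l by rewrite lt_def lp dotp_ge0.
by rewrite -(ler_pM2r lpos); nra.
Qed.

End FeasibleFromRows.

Section GramFactorization.
Variable R : realType.

Definition psd n (M : 'M[R]_n) := forall x : 'rV[R]_n, 0 <= dotp (x *m M) x.

Lemma psd_conic m (a b : R) (A B : 'M[R]_m) :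
  0 <= a -> 0 <= b -> psd A -> psd B -> psd (a *: A + b *: B).
Proof.
move=> a0 b0 pA pB x; rewrite mulmxDr dotpDl -!scalemxAr !dotpZl.
by rewrite addr_ge0 ?mulr_ge0.
Qed.

Lemma dotp_mulmxl m n (x : 'rV[R]_m) (A : 'M[R]_(m, n)) (y : 'rV[R]_n) :
  dotp (x *m A) y = dotp x (y *m A^T).
Proof. by rewrite !dotpE trmx_mul trmxK mulmxA. Qed.

Lemma dotp_mul_gram n d (y : 'rV[R]_n) (X : 'M[R]_(n, d)) :
  dotp (y *m (X *m X^T)) y = dotp (y *m X) (y *m X).
Proof. by rewrite mulmxA dotp_mulmxl trmxK. Qed.

Lemma psd_gram n d (X : 'M[R]_(n, d)) : psd (X *m X^T).
Proof. by move=> y; rewrite dotp_mul_gram dotp_ge0. Qed.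

Lemma dotp_row_gram n d (X : 'M[R]_(n, d)) i j :
  dotp (row i X) (row j X) = (X *m X^T) i j.
Proof. by rewrite mxE; apply: eq_bigr => l _; rewrite !mxE. Qed.

Lemma dotp_delta_mx n (A : 'M[R]_n) i : dotp (delta_mx 0 i *m A) (delta_mx 0 i) = A i i.
Proof.
rewrite /dotp (bigD1 i) //= big1 ?addr0 => [|j /negbTE ji]; rewrite -rowE !mxE ?eqxx ?mulr1 //.
by rewrite ji mulr0.
Qed.

Lemma quadratic_ge0_discr (a b q : R) :
  0 <= a -> (forall u, 0 <= a * u ^+ 2 + 2 * b * u + q) -> b ^+ 2 <= a * q.
Proof.
move=> a0 H; have [a00|ap] := eqVneq a 0.
  have [->|b0] := eqVneq b 0; first by rewrite expr0n a00 mul0r.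
  have := H (- (q + 1) / (2 * b)); rewrite a00 mul0r add0r mulrC divfK.
    by rewrite opprD addrC addrA subrr add0r oppr_ge0 ler10.
  by rewrite mulf_neq0 ?pnatr_eq0.
have apos : 0 < a by rewrite lt_def ap.
have := H (- b / a).
have -> : a * (- b / a) ^+ 2 + 2 * b * (- b / a) + q = (a * q - b ^+ 2) / a by field.
by rewrite pmulr_lge0 ?invr_gt0 // subr_ge0.
Qed.

Lemma dotp_row_mx m n (x1 y1 : 'rV[R]_m) (x2 y2 : 'rV[R]_n) :
  dotp (row_mx x1 x2) (row_mx y1 y2) = dotp x1 y1 + dotp x2 y2.
Proof.
rewrite /dotp big_split_ord; congr (_ + _); apply: congr_big => // i _.
  by rewrite !row_mxEl.
by rewrite !row_mxEr.
Qed.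

Lemma dotp_rV1 (x y : 'rV[R]_1) : dotp x y = x 0 0 * y 0 0.
Proof. by rewrite /dotp big_ord1. Qed.

Lemma dotp_block_mx n (a u : R) (r y : 'rV[R]_n) (D : 'M[R]_n) :
  dotp (row_mx u%:M y *m block_mx a%:M r r^T D) (row_mx u%:M y)
  = a * u ^+ 2 + 2 * dotp r y * u + dotp (y *m D) y.
Proof.
rewrite mul_row_block dotp_row_mx !dotpDl dotp_rV1 -scalar_mxM mul_scalar_mx dotpZl.
by rewrite dotp_rV1 -dotpE !mxE !eqxx !mulr1n (dotpC y r); ring.
Qed.

Lemma psd_block_schur n (a : R) (r : 'rV[R]_n) (D : 'M[R]_n) :
  psd (block_mx a%:M r r^T D) ->
  exists r' : 'rV[R]_n, r = Num.sqrt a *: r' /\ psd (D - r'^T *m r').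
Proof.
move=> psdM.
have quad y u : 0 <= a * u ^+ 2 + 2 * dotp r y * u + dotp (y *m D) y.
  by rewrite -dotp_block_mx; apply: psdM.
have a0 : 0 <= a by have := quad 0 1; rewrite mul0mx !dotp0r expr1n; lra.
have discr y : dotp r y ^+ 2 <= a * dotp (y *m D) y.
  by apply: quadratic_ge0_discr => // u; apply: quad.
have Dr' r' y : dotp (y *m (D - r'^T *m r')) y = dotp (y *m D) y - dotp r' y ^+ 2.
  rewrite mulmxBr dotpDl dotpNl -{2}[r']trmxK dotp_mul_gram dotp_rV1 -dotpE.
  by rewrite (dotpC y) expr2.
have [a00|ap] := eqVneq a 0.
  exists 0; rewrite scaler0 trmx0 mul0mx subr0; split; last first.
    by move=> y; have := quad y 0; rewrite !expr0n !mulr0 !add0r.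
  apply/eqP; rewrite -dotp_eq0 -sqrf_eq0 eq_le sqr_ge0 andbT.
  by have := discr r; rewrite a00 mul0r.
have sa : Num.sqrt a != 0 by rewrite sqrtr_eq0 -ltNge lt_def ap.
exists ((Num.sqrt a)^-1 *: r); split; first by rewrite scalerA divff ?scale1r.
move=> y; rewrite Dr' dotpZl exprMn exprVn sqr_sqrtr // subr_ge0.
by rewrite mulrC ler_pdivrMr ?lt_def ?ap // mulrC discr.
Qed.

Lemma psd_gram_factor n (M : 'M[R]_n) :
  M^T = M -> psd M -> exists X : 'M[R]_n, M = X *m X^T.
Proof.
elim: n M => [|n IH] M sM pM; first by exists 0; rewrite [M]flatmx0 [RHS]flatmx0.
move: M sM pM; rewrite -[n.+1]/(1 + n)%N => M sM pM.
set a := ulsubmx M 0 0; set r := ursubmx M; set D := drsubmx M.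
have ME : M = block_mx a%:M r r^T D.
  by rewrite -mx11_scalar /r trmx_ursub sM submxK.
have sD : D^T = D by rewrite /D trmx_drsub sM.
have [r' [rE psdS]] : exists r', r = Num.sqrt a *: r' /\ psd (D - r'^T *m r').
  by apply: (@psd_block_schur n a r D); rewrite -ME.
have [W WE] : exists W : 'M[R]_n, D - r'^T *m r' = W *m W^T.
  by apply: (IH _ _ psdS); rewrite linearB /= trmx_mul trmxK sD.
have a0 : 0 <= a.
  by have := pM (row_mx 1%:M 0); rewrite {1}ME dotp_block_mx mul0mx !dotp0r expr1n; lra.
exists (block_mx (Num.sqrt a)%:M 0 r'^T W).
rewrite tr_block_mx mulmx_block !trmx0 !mul0mx !mulmx0 !addr0 trmxK tr_scalar_mx {1}ME.
congr block_mx; first by rewrite -scalar_mxM -expr2 sqr_sqrtr.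
- by rewrite mul_scalar_mx rE.
- by rewrite mul_mx_scalar rE linearZ.
- by rewrite -WE addrC subrK.
Qed.

End GramFactorization.

Section SphereMinimum.
Variable R : realType.

Lemma continuous_big (T : topologicalType) (I : Type) (s : seq I) (P : pred I)
    (F : I -> T -> R) :
  (forall i, continuous (F i)) -> continuous (fun t => \sum_(i <- s | P i) F i t).
Proof.
move=> cF; elim: s => [|i s IH].
  by under eq_fun do rewrite big_nil; apply: cst_continuous.
under eq_fun do rewrite big_cons; case: (P i) => // t.
exact: (@continuousD _ _ _ (F i) _ t (cF i t) (IH t)).
Qed.

Lemma sphere_min m (g : 'rV[R]_m -> R) : (0 < m)%N -> continuous g ->
  exists2 w, dotp w w = 1 & forall w', dotp w' w' = 1 -> g w <= g w'.
Proof.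
move=> m0 cg; pose S := [set w : 'rV[R]_m | dotp w w = 1].
have S0 : S !=set0.
  exists (delta_mx 0 (Ordinal m0)); rewrite /S /= dotpxx (bigD1 (Ordinal m0)) //=.
  by rewrite big1 ?mxE ?eqxx ?expr1n ?addr0 // => i /negbTE i0; rewrite mxE i0 expr0n.
have cS : compact S.
  apply: (subclosed_compact _
    (rV_compact (fun=> @segment_compact _ (-1 : R) 1))).
    have cdot : continuous (fun w : 'rV[R]_m => dotp w w).
      apply: continuous_big => i w.
      by apply: continuousM; apply: (@coord_continuous R 1 m 0 i).
    by have := proj1 (continuous_closedP _) cdot _ (@closed_eq R 1); congr closed.
  move=> w /= w1 i; have : w 0 i ^+ 2 <= 1.
    by rewrite -w1 dotpxx (bigD1 i) //= lerDl sumr_ge0 // => j _; apply: sqr_ge0.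
  by rewrite in_itv /= expr2 => wi; apply/andP; split; nra.
have [w /set_mem Sw wmin] := compact_EVT_min S0 cS (continuous_subspaceT cg).
by exists w => // w' Sw'; apply: wmin; apply/mem_set.
Qed.

End SphereMinimum.

Section Frobenius.
Variable R : realType.

Definition frob m n (A B : 'M[R]_(m, n)) := dotp (mxvec A) (mxvec B).

Lemma frob_sum m n (A B : 'M[R]_(m, n)) : frob A B = \sum_i \sum_j A i j * B i j.
Proof.
rewrite /frob /dotp (reindex _ (curry_mxvec_bij _ _)) /= pair_bigA /=.
by apply: congr_big => // -[i j] _; rewrite !mxvecE.
Qed.

Lemma frobDZr m n (A B D : 'M[R]_(m, n)) t : frob A (B + t *: D) = frob A B + t * frob A D.
Proof. by rewrite /frob linearD linearZ /= dotpDr dotpZr. Qed.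

Lemma frobBr m n (A B D : 'M[R]_(m, n)) : frob A (B - D) = frob A B - frob A D.
Proof. by rewrite -scaleN1r frobDZr mulN1r. Qed.

Lemma frobZBl m n a (A B D : 'M[R]_(m, n)) : frob (a *: A - B) D = a * frob A D - frob B D.
Proof. by rewrite /frob linearB linearZ /= dotpDl dotpNl dotpZl. Qed.

Lemma frobC m n (A B : 'M[R]_(m, n)) : frob A B = frob B A.
Proof. exact: dotpC. Qed.

Lemma frobZl m n a (A B : 'M[R]_(m, n)) : frob (a *: A) B = a * frob A B.
Proof. by rewrite /frob linearZ dotpZl. Qed.

Lemma frob_mxtrace m n (A B : 'M[R]_(m, n)) : frob A B = \tr (A *m B^T).
Proof.
rewrite frob_sum; apply: congr_big => // i _; rewrite mxE.
by apply: congr_big => // j _; rewrite mxE.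
Qed.

Lemma frob_rank1 n (A : 'M[R]_n) (z : 'rV[R]_n) : frob (z^T *m z) A = dotp (z *m A) z.
Proof. by rewrite /frob !dotpE (mxvec_dotmul A z z). Qed.

End Frobenius.

Section PositivePart.
Variable R : realFieldType.
Implicit Types x e : R.

Definition pospart x := Num.max x 0.

Lemma pospartE x : pospart x = if x <= 0 then 0 else x.
Proof. by rewrite /pospart maxEle. Qed.

Lemma pospart_ge0 x : 0 <= pospart x.
Proof. by rewrite pospartE; case: ifP => // /negbT; rewrite -ltNge => /ltW. Qed.

Lemma pospart_eq0 x : (pospart x == 0) = (x <= 0).
Proof. by rewrite pospartE; case: leP => h; rewrite ?eqxx // gt_eqF. Qed.

Lemma pospart_mul_self x : pospart x * x = pospart x ^+ 2.
Proof. by rewrite pospartE; case: ifP; rewrite ?mul0r ?expr0n ?expr2. Qed.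

Lemma pospart_sqrD_le x e :
  pospart (x + e) ^+ 2 <= pospart x ^+ 2 + 2 * pospart x * e + e ^+ 2.
Proof. by rewrite !pospartE; case: ifP => h1; case: ifP => h2; rewrite ?expr0n /=; nra. Qed.

Lemma linear_term_ge0 (L C : R) :
  0 <= C -> (forall t, 0 < t -> t <= 1 -> 0 <= t * L + t ^+ 2 * C) -> 0 <= L.
Proof.
move=> C0 H; rewrite leNgt; apply/negP => L0.
have CL : 0 < C - L by lra.
pose t := - L / (C - L).
have t0 : 0 < t by rewrite divr_gt0 ?oppr_gt0.
have t1 : t <= 1 by rewrite ler_pdivrMr ?mul1r //; lra.
have := H t t0 t1.
have -> : t * L + t ^+ 2 * C = - (t * (L ^+ 2 / (C - L))) by rewrite /t; field; lra.
by rewrite oppr_ge0 leNgt mulr_gt0 ?divr_gt0 //; nra.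
Qed.

End PositivePart.

Section Penalty.
Variables (R : realType) (n : nat) (G : rel 'I_n) (k : R).

Local Notation ones := (const_mx 1 : 'M[R]_n).

(* Vanishes iff [k <= sum_ij B_ij] and [B_ij <= 0] on the edges of [G]. *)
Definition penalty (B : 'M[R]_n) :=
  pospart (k - frob ones B) ^+ 2 + \sum_i \sum_(j | G i j) pospart (B i j) ^+ 2.

Definition edge_mx (B : 'M[R]_n) : 'M[R]_n :=
  \matrix_(i, j) (if G i j then pospart (B i j) else 0).

Lemma edge_mx_tr B : (forall i j, G i j = G j i) -> B^T = B -> (edge_mx B)^T = edge_mx B.
Proof. by move=> Gsym sB; apply/matrixP => i j; rewrite !mxE Gsym -[in RHS]sB mxE. Qed.

(* Minus half the gradient of [penalty] at [B]. *)
Definition penalty_grad (B : 'M[R]_n) := pospart (k - frob ones B) *: ones - edge_mx B.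

Lemma frob_penalty_grad B D :
  frob (penalty_grad B) D =
  pospart (k - frob ones B) * frob ones D - \sum_i \sum_(j | G i j) pospart (B i j) * D i j.
Proof.
rewrite /penalty_grad frobZBl [frob (edge_mx B) D]frob_sum; congr (_ - _).
apply: congr_big => // i _; rewrite [RHS]big_mkcond.
by apply: congr_big => // j _; rewrite mxE; case: (G i j); rewrite ?mul0r.
Qed.

Lemma frob_penalty_grad_self B :
  frob (penalty_grad B) B = pospart (k - frob ones B) * k - penalty B.
Proof.
rewrite frob_penalty_grad /penalty.
have -> : \sum_i \sum_(j | G i j) pospart (B i j) * B i j =
    \sum_i \sum_(j | G i j) pospart (B i j) ^+ 2.
  by apply: congr_big => // i _; apply: congr_big => // j _; rewrite pospart_mul_self.
rewrite -(pospart_mul_self (k - frob ones B)); ring.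
Qed.

Lemma penalty_addZ_le B D t :
  penalty (B + t *: D) <= penalty B - 2 * t * frob (penalty_grad B) D
    + t ^+ 2 * (frob ones D ^+ 2 + \sum_i \sum_(j | G i j) D i j ^+ 2).
Proof.
rewrite frob_penalty_grad /penalty; set a := pospart (k - frob ones B).
have sum_le : \sum_i \sum_(j | G i j) pospart ((B + t *: D) i j) ^+ 2 <=
    \sum_i \sum_(j | G i j) pospart (B i j) ^+ 2
    + 2 * t * (\sum_i \sum_(j | G i j) pospart (B i j) * D i j)
    + t ^+ 2 * \sum_i \sum_(j | G i j) D i j ^+ 2.
  rewrite !mulr_sumr -!big_split; apply: ler_sum => i _.
  rewrite !mulr_sumr -!big_split; apply: ler_sum => j _ /=; rewrite !mxE.
  by apply: le_trans (pospart_sqrD_le _ _) _; lra.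
have := pospart_sqrD_le (k - frob ones B) (- (t * frob ones D)).
rewrite -/a (_ : k - frob ones B + - (t * frob ones D) = k - frob ones (B + t *: D)).
  by move=> h; apply: le_trans (lerD h sum_le) _; lra.
by rewrite frobDZr; ring.
Qed.

Section FirstOrder.
Variable X0 : 'M[R]_n.
Hypothesis X0_unit : \tr (X0 *m X0^T) = 1.
Hypothesis X0_min :
  forall X : 'M[R]_n, \tr (X *m X^T) = 1 -> penalty (X0 *m X0^T) <= penalty (X *m X^T).

Let B0 := X0 *m X0^T.

Lemma penalty_first_order P :
  P^T = P -> psd P -> \tr P = 1 -> frob (penalty_grad B0) P <= frob (penalty_grad B0) B0.
Proof.
move=> sP pP trP; set D := P - B0.
suff : frob (penalty_grad B0) D <= 0 by rewrite frobBr subr_le0.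
set C := frob ones D ^+ 2 + \sum_i \sum_(j | G i j) D i j ^+ 2.
have C0 : 0 <= C.
  by rewrite addr_ge0 ?sqr_ge0 // sumr_ge0 // => i _; rewrite sumr_ge0 // => j _; apply: sqr_ge0.
suff : 0 <= - 2 * frob (penalty_grad B0) D by lra.
apply: (linear_term_ge0 C0) => t t0 t1.
have BtE : (1 - t) *: B0 + t *: P = B0 + t *: D.
  by rewrite /D scalerBr scalerBl scale1r -addrA (addrC (- _)).
have sBt : ((1 - t) *: B0 + t *: P)^T = (1 - t) *: B0 + t *: P.
  by rewrite linearD !linearZ /= sP /B0 trmx_mul trmxK.
have pBt : psd ((1 - t) *: B0 + t *: P).
  by apply: psd_conic => //; [rewrite subr_ge0 | exact: ltW | exact: psd_gram].
have [Xt XtE] := psd_gram_factor sBt pBt.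
have := @X0_min Xt; rewrite -XtE mxtraceD !mxtraceZ trP X0_unit BtE => /(_ _).
have := penalty_addZ_le B0 D t; rewrite -/C; nra.
Qed.

Lemma penalty_grad_quad_le z :
  dotp (z *m penalty_grad B0) z <= (pospart (k - frob ones B0) * k - penalty B0) * dotp z z.
Proof.
have [->|z0] := eqVneq z 0; first by rewrite mul0mx !dotp0l mulr0.
have zz : 0 < dotp z z by rewrite dotp_gt0.
pose P := (dotp z z)^-1 *: (z^T *m z).
have sP : P^T = P by rewrite linearZ /= trmx_mul trmxK.
have pP : psd P.
  move=> x; rewrite -scalemxAr dotpZl mulr_ge0 ?invr_ge0 ?dotp_ge0 //.
  by have := psd_gram z^T x; rewrite trmxK.
have trP : \tr P = 1.
  by rewrite mxtraceZ mxtrace_mulC trace_mx11 -dotpE mulVf ?gt_eqF.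
have := penalty_first_order sP pP trP.
rewrite frob_penalty_grad_self frobC frobZl frob_rank1 -ler_pdivlMl ?invr_gt0 //.
by rewrite invrK mulrC.
Qed.

End FirstOrder.

Lemma rigid_coloring_of_quad_le (a h : R) (M : 'M[R]_n) :
  (0 < n)%N -> (forall i, G i i = false) -> M^T = M ->
  (forall i j, 0 <= M i j) -> (forall i j, ~~ G i j -> M i j = 0) ->
  0 <= a -> 0 < h ->
  (forall z, dotp (z *m (a *: ones - M)) z <= (a * k - h) * dotp z z) ->
  exists k', [/\ 1 < k', k' < k & exists u, rigid_vector_coloring (compl_graph G) k' u].
Proof.
move=> n0 Girr sM M0 Moff a0 h0 quad.
have Mdiag i : M i i = 0 by rewrite Moff ?Girr.
have a_le : a <= a * k - h.
  have := quad (delta_mx 0 (Ordinal n0)).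
  by rewrite dotp_delta_mx -[X in dotp X]mulmx1 dotp_delta_mx !mxE Mdiag eqxx /= mulr1n; lra.
have ap : 0 < a by rewrite lt_def a0 andbT; apply: contraTneq a_le => ->; lra.
pose k' := k - h / (2 * a).
have hk' : h / (2 * a) <= (k - 1) / 2.
  by rewrite ler_pdivrMr ?mulr_gt0 //; nra.
have hpos : 0 < h / (2 * a) by rewrite divr_gt0 ?mulr_gt0.
have k'1 : 0 < k' - 1 by rewrite /k'; lra.
have nz : (k' - 1 != 0) && (a != 0) by rewrite !gt_eqF.
pose U := (a * (k' - 1))^-1 *: ((a * k')%:M - (a *: ones - M)).
have UE i j : U i j = (a * (k' - 1))^-1 * (a * k' * (i == j)%:R - a + M i j).
  by rewrite !mxE; ring.
have sU : U^T = U.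
  by apply/matrixP => i j; rewrite mxE !UE eq_sym -[in M i j]sM mxE.
have s0 : 0 <= (a * (k' - 1))^-1 by rewrite invr_ge0 ltW ?mulr_gt0.
have pU : psd U.
  move=> z; rewrite -scalemxAr dotpZl mulr_ge0 //.
  rewrite mulmxBr dotpDl dotpNl mul_mx_scalar dotpZl subr_ge0.
  apply: le_trans (quad z) _; rewrite ler_wpM2r ?dotp_ge0 //.
  have -> : a * k' = a * k - h / 2 by rewrite /k'; field; rewrite gt_eqF.
  lra.
have [W WE] := psd_gram_factor sU pU.
exists k'; split; [lra | rewrite /k'; lra | exists (fun i => row i W)].
have uE i j : dotp (row i W) (row j W) = U i j by rewrite dotp_row_gram -WE.
split=> [i|]; first by rewrite uE UE eqxx Mdiag /= mulr1n; field.
split=> [i j /andP[ij /Moff Mij] | i j ij]; rewrite uE UE (negbTE ij).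
  by rewrite Mij /= mulr0n; field.
rewrite /compl_graph ij /= negbK => Gij.
have -> : - (k' - 1)^-1 = (a * (k' - 1))^-1 * (- a) by field.
by rewrite /= mulr0n mulr0 add0r ler_wpM2l // lerDl M0.
Qed.

End Penalty.

Section Dichotomy.
Variables (R : realType) (n : nat) (G : rel 'I_n) (k : R).
Local Notation ones := (const_mx 1 : 'M[R]_n).

Lemma continuous_penalty (T : topologicalType) (B : T -> 'M[R]_n) :
  (forall i j, continuous (fun t => B t i j)) -> continuous (fun t => penalty G k (B t)).
Proof.
move=> cB; have cpos (f : T -> R) : continuous f -> continuous (fun t => pospart (f t) ^+ 2).
  move=> cf; have cp : continuous (fun t => pospart (f t)).
    by move=> t; apply: continuous_max; [exact: cf | exact: cst_continuous].
  by move=> t; apply: (continuousM (cp t) (cp t)).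
have c1 : continuous (fun t => pospart (k - frob ones (B t)) ^+ 2).
  apply: cpos; under eq_fun do rewrite frob_sum.
  move=> t; apply: continuousB; first exact: cst_continuous.
  apply: continuous_big => i; apply: continuous_big => j.
  by under eq_fun do rewrite mxE mul1r; apply: cB.
have c2 : continuous (fun t => \sum_i \sum_(j | G i j) pospart (B t i j) ^+ 2).
  by apply: continuous_big => i; apply: continuous_big => j; apply: cpos.
by move=> t; exact: (continuousD (c1 t) (c2 t)).
Qed.

Lemma penalty_minimizer : (0 < n)%N ->
  exists2 X0 : 'M[R]_n, \tr (X0 *m X0^T) = 1 &
    forall X : 'M[R]_n, \tr (X *m X^T) = 1 ->
      penalty G k (X0 *m X0^T) <= penalty G k (X *m X^T).
Proof.
move=> n0; pose g (w : 'rV[R]_(n * n)) := penalty G k (vec_mx w *m (vec_mx w)^T).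
have cg : continuous g.
  apply: continuous_penalty => i j; under eq_fun do rewrite mxE.
  apply: continuous_big => l w; under eq_fun do rewrite !mxE.
  by apply: continuousM; apply: (@coord_continuous R 1 (n * n)).
have trE (X : 'M[R]_n) : \tr (X *m X^T) = dotp (mxvec X) (mxvec X).
  by rewrite -frob_mxtrace.
have nn : (0 < n * n)%N by rewrite muln_gt0 n0.
have [w w1 wmin] := sphere_min nn cg.
exists (vec_mx w) => [|X]; first by rewrite trE vec_mxK.
by rewrite trE => X1; have := wmin _ X1; rewrite /g mxvecK.
Qed.

Lemma feasible_of_penalty_eq0 (X : 'M[R]_n) :
  \tr (X *m X^T) = 1 -> penalty G k (X *m X^T) = 0 ->
  exists (v0 : 'rV[R]_n) (v : 'I_n -> 'rV[R]_n),
    theta2'_feasible G v0 v /\ k <= theta2'_value v0 v.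
Proof.
set B := X *m X^T => trB /eqP.
have edges_ge0 : 0 <= \sum_i \sum_(j | G i j) pospart (B i j) ^+ 2.
  by apply: sumr_ge0 => i _; apply: sumr_ge0 => j _; apply: sqr_ge0.
rewrite paddr_eq0 ?sqr_ge0 // sqrf_eq0 pospart_eq0 subr_le0 => /andP[k_le edges0].
have edge_le0 i j : G i j -> B i j <= 0.
  move: edges0; rewrite psumr_eq0 => [/allP/(_ i (mem_index_enum _))|l _]; last first.
    by apply: sumr_ge0 => m _; apply: sqr_ge0.
  rewrite implyTb psumr_eq0 => [/allP/(_ j (mem_index_enum _))|l _]; last exact: sqr_ge0.
  by move=> /implyP h /h; rewrite sqrf_eq0 pospart_eq0.
have rows1 : \sum_i dotp (row i X) (row i X) = 1.
  by rewrite -trB; apply: congr_big => // i _; rewrite dotp_row_gram.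
have rowsG i j : G i j -> dotp (row i X) (row j X) <= 0.
  by rewrite dotp_row_gram; apply: edge_le0.
have [v0 [v [fv vle]]] := theta2'_value_ge_sum_rows rows1 rowsG.
exists v0, v; split => //; apply: le_trans k_le (le_trans _ vle).
rewrite frob_sum dotp_suml; apply: ler_sum => i _; rewrite dotp_sumr.
by apply: ler_sum => j _; rewrite mxE mul1r dotp_row_gram.
Qed.

Lemma feasible_or_rigid_coloring : (0 < n)%N -> simple_graph G ->
  (exists (v0 : 'rV[R]_n) (v : 'I_n -> 'rV[R]_n),
      theta2'_feasible G v0 v /\ k <= theta2'_value v0 v) \/
  (exists k', [/\ 1 < k', k' < k & exists u, rigid_vector_coloring (compl_graph G) k' u]).
Proof.
move=> n0 [Gsym Girr]; have [X0 X0_unit X0_min] := penalty_minimizer n0.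
set B0 := X0 *m X0^T.
have [pen0|pen_neq0] := eqVneq (penalty G k B0) 0.
  by left; apply: feasible_of_penalty_eq0 X0_unit pen0.
have pen_gt0 : 0 < penalty G k B0.
  rewrite lt_def pen_neq0 addr_ge0 ?sqr_ge0 //.
  by apply: sumr_ge0 => i _; apply: sumr_ge0 => j _; apply: sqr_ge0.
right; apply: (@rigid_coloring_of_quad_le _ _ _ _ _ _ (edge_mx G B0) n0 Girr _ _ _
  (pospart_ge0 _) pen_gt0).
- by apply: edge_mx_tr; rewrite // /B0 trmx_mul trmxK.
- by move=> i j; rewrite mxE; case: ifP => // _; apply: pospart_ge0.
- by move=> i j /negbTE Gij; rewrite mxE Gij.
- exact: penalty_grad_quad_le X0_unit X0_min.
Qed.

End Dichotomy.

Theorem lemma2 (R : realType) (n : nat) (G : rel 'I_n) :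
  (0 < n)%N -> simple_graph G ->
  (exists (d : nat) (v0 : 'rV[R]_d) (v : 'I_n -> 'rV[R]_d),
      (0 < d)%N /\ theta2'_feasible G v0 v /\
      theta2'_value v0 v = theta2 R G) /\
  (forall (d : nat) (v0 : 'rV[R]_d) (v : 'I_n -> 'rV[R]_d),
      (0 < d)%N -> theta2'_feasible G v0 v ->
      theta2'_value v0 v <= theta2 R G).
Proof.
move=> n0 simpleG.
set S := [set k : R | 1 < k /\ exists u, rigid_vector_coloring (compl_graph G) k u].
have thetaE : theta2 R G = inf S by [].
have S_lb : has_lbound S by exists 1 => k [/ltW].
have value_le_n d (v0 : 'rV[R]_d) (v : 'I_n -> 'rV[R]_d) : theta2'_value v0 v <= n%:R.
  apply: le_trans (_ : \sum_(i < n) (1 : R) <= _); last by rewrite sumr_const card_ord.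
  by apply: ler_sum => i _; apply: cfun_le1.
have S0 : S !=set0.
  have [[v0 [v [_ nv]]]|[k' [k'1 _ col]]] := feasible_or_rigid_coloring (n%:R + 1 : R) n0 simpleG.
    by have := le_trans nv (value_le_n _ v0 v); lra.
  by exists k'.
have value_le d (v0 : 'rV[R]_d) (v : 'I_n -> 'rV[R]_d) : theta2'_feasible G v0 v -> theta2'_value v0 v <= inf S.
  by move=> fv; apply: lb_le_inf S0 _ => k [k1 [u col]]; apply: theta2'_value_le_coloring fv k1 col.
rewrite thetaE; split=> [|d v0 v _]; last exact: value_le.
have [[v0 [v [fv inf_le]]]|[k' [k'1 k'_lt col]]] := feasible_or_rigid_coloring (inf S) n0 simpleG.
  by exists n, v0, v; split=> //; split=> //; apply/eqP; rewrite eq_le value_le.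
by have := ge_inf S_lb (conj k'1 col); rewrite leNgt k'_lt.
Qed.
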